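(* Let $f:\mathbb R^n\to\mathbb R$ be an integrable log-concave function with full-dimensional support. Then for any $t\in(0,1)$ and any $x\in\mathrm{supp}\,f-\mathrm{supp}\,f$, $$\mathcal A_t(f)(x)\subseteq\tfrac12x+\mathcal A_t(f)(0).$$ Consequently, $M_t(f)=|\mathcal A_t(f)(0)|$.
   Context: Let $\bar f(x)=f(-x)$. For $t\in(0,1]$ and $x\in\mathrm{supp}\,f-\mathrm{supp}\,f$, $\mathcal A_t(f)(x)=\{z\in\mathrm{supp}\,f\cap(x+\mathrm{supp}\,f): f(z)f(z-x)\geq t\Vert f\Vert_\infty^2\}$ (so $\mathcal A_t(f)(0)=\{z: f(z)\geq\sqrt t\Vert f\Vert_\infty\}$), and $M_t(f)=\max_{x_0\in\mathrm{supp}\,f-\mathrm{supp}\,f}|\mathcal A_t(f)(x_0)|$, with $|\cdot|$ Lebesgue volume. *)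

From HB Require Import structures.
From mathcomp Require Import all_boot all_order all_algebra.
From mathcomp Require Import all_classical all_reals all_analysis.
Set Implicit Arguments. Unset Strict Implicit. Unset Printing Implicit Defensive.
Import Order.TTheory GRing.Theory Num.Theory.
Import numFieldNormedType.Exports.
Local Open Scope classical_set_scope.
Local Open Scope ring_scope.

Definition box (R : realType) (n : nat) (a b : 'rV[R]_n) : set 'rV[R]_n :=
  [set x | forall i : 'I_n, a 0 i <= x 0 i < b 0 i].

Definition box_vol (R : realType) (n : nat) (a b : 'rV[R]_n) : R :=
  \prod_(i < n) Num.max (b 0 i - a 0 i) 0.

(* Lebesgue (outer) measure on R^n: infimum of total volumes of countable
   covers by boxes.  It coincides with the Lebesgue measure on Lebesgue
   measurable sets. *)
Definition leb_vol (R : realType) (n : nat) (A : set 'rV[R]_n) : \bar R :=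
  ereal_inf [set s | exists a b : nat -> 'rV[R]_n,
      A `<=` \bigcup_k box (a k) (b k) /\
      s = (\sum_(0 <= k <oo) (box_vol (a k) (b k))%:E)%E].

Definition supp (R : realType) (n : nat) (f : 'rV[R]_n -> R) : set 'rV[R]_n :=
  [set x | 0 < f x].

Definition mdiff (R : realType) (n : nat) (A : set 'rV[R]_n) : set 'rV[R]_n :=
  [set x | exists a b, A a /\ A b /\ x = a - b].

Definition log_concave (R : realType) (n : nat) (f : 'rV[R]_n -> R) : Prop :=
  (forall x, 0 <= f x) /\
  forall (x y : 'rV[R]_n) (l : R), 0 < l < 1 ->
    f x `^ (1 - l) * f y `^ l <= f ((1 - l) *: x + l *: y).

Definition subgraph (R : realType) (n : nat) (f : 'rV[R]_n -> R) : set 'rV[R]_n.+1 :=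
  [set y | 0 < y 0 ord_max < f (\row_(i < n) y 0 (widen_ord (leqnSn n) i))].

(* A nonnegative (log-concave, hence Lebesgue measurable) f is integrable iff
   the n+1-dimensional Lebesgue measure of its subgraph (= its integral) is finite. *)
Definition integrable_nonneg (R : realType) (n : nat) (f : 'rV[R]_n -> R) : Prop :=
  (leb_vol (subgraph f) < +oo)%E.

Definition sup_norm (R : realType) (n : nat) (f : 'rV[R]_n -> R) : R :=
  sup (range f).

Definition At (R : realType) (n : nat) (f : 'rV[R]_n -> R) (t : R) (x : 'rV[R]_n)
  : set 'rV[R]_n :=
  [set z | supp f z /\ supp f (z - x) /\ t * sup_norm f ^+ 2 <= f z * f (z - x)].

Definition Mt (R : realType) (n : nat) (f : 'rV[R]_n -> R) (t : R) : \bar R :=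
  ereal_sup [set leb_vol (At f t x0) | x0 in mdiff (supp f)].

From HB Require Import structures.
From mathcomp Require Import all_boot all_order all_algebra.
From mathcomp Require Import all_classical all_reals all_analysis.
From mathcomp Require Import ring lra.
Import Order.TTheory GRing.Theory Num.Theory.
Import numFieldNormedType.Exports.
Local Open Scope classical_set_scope.
Local Open Scope ring_scope.

(* Log-concavity at the midpoint gives f(z - x/2)^2 >= f(z) f(z - x), so every
   z in A_t(f)(x) is the translate by x/2 of a point of A_t(f)(0).  Outer measure
   is monotone and does not increase under translations, hence
   |A_t(f)(x)| <= |A_t(f)(0)|, and 0 lies in supp f - supp f. *)

Section OuterMeasure.
Context {R : realType} {n : nat}.

Lemma leb_volS (A B : set 'rV[R]_n) : A `<=` B -> (leb_vol A <= leb_vol B)%E.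
Proof.
move=> AB; apply: ereal_inf_le_tmp => s [a [b [cov ->]]].
by exists a, b; split => //; apply: subset_trans cov.
Qed.

Lemma leb_vol_translate_le (A : set 'rV[R]_n) (v : 'rV[R]_n) :
  (leb_vol [set (v + z)%R | z in A] <= leb_vol A)%E.
Proof.
apply: ereal_inf_le_tmp => s [a [b [cov ->]]].
exists (fun k => v + a k), (fun k => v + b k); split.
  move=> _ [z Az <-]; have [k _ zk] := cov z Az.
  by exists k => // i; rewrite !mxE; have := zk i; lra.
apply: eq_eseriesr => k _; congr (_%:E); apply: eq_bigr => i _.
by rewrite !mxE opprD addrACA subrr add0r.
Qed.

End OuterMeasure.

Section LogConcave.
Variables (R : realType) (n : nat) (f : 'rV[R]_n -> R).
Hypothesis f_lc : log_concave f.

Lemma log_concave_midpoint (x y : 'rV[R]_n) :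
  Num.sqrt (f x * f y) <= f (2^-1 *: x + 2^-1 *: y).
Proof.
have [f_ge0 f_ineq] := f_lc.
have half_in01 : 0 < (2^-1 : R) < 1 by apply/andP; split; lra.
have := f_ineq x y _ half_in01.
have -> : (1 - 2^-1 : R) = 2^-1 by field.
by rewrite !powR12_sqrt ?f_ge0 // -sqrtrM ?f_ge0.
Qed.

Lemma At_subset_translate_At0 (t : R) (x : 'rV[R]_n) :
  At f t x `<=` [set 2^-1 *: x + z | z in At f t 0].
Proof.
move=> z [fz_gt0 [fzx_gt0 t_le]].
exists (z - 2^-1 *: x); last by rewrite addrC subrK.
have mid : 2^-1 *: z + 2^-1 *: (z - x) = z - 2^-1 *: x.
  by apply/matrixP => i j; rewrite !mxE; field.
have prod_ge0 : 0 <= f z * f (z - x) by rewrite ltW // mulr_gt0.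
have sqrt_le := log_concave_midpoint z (z - x); rewrite mid in sqrt_le.
have sqrt_gt0 : 0 < Num.sqrt (f z * f (z - x)) by rewrite sqrtr_gt0 mulr_gt0.
have fmid_gt0 : 0 < f (z - 2^-1 *: x) by apply: lt_le_trans sqrt_le.
rewrite /At /supp /= subr0; split => //; split => //.
apply: (le_trans t_le); rewrite -(sqr_sqrtr prod_ge0) expr2.
by apply: ler_pM => //; apply: ltW.
Qed.

Lemma Mt_eq_At0 (t : R) : supp f !=set0 -> Mt f t = leb_vol (At f t 0).
Proof.
move=> [p fp_gt0]; apply/eqP; rewrite eq_le; apply/andP; split.
  apply: ge_ereal_sup => _ [x _ <-].
  have := leb_vol_translate_le (At f t 0) (2^-1 *: x).
  exact/le_trans/leb_volS/At_subset_translate_At0.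
apply: ereal_sup_ubound; exists 0 => //.
by exists p, p; rewrite subrr.
Qed.

End LogConcave.

Theorem lemma3p6 (R : realType) (n : nat) (f : 'rV[R]_n -> R) :
  log_concave f -> integrable_nonneg f -> interior (supp f) !=set0 ->
  forall t : R, 0 < t < 1 ->
    (forall x, mdiff (supp f) x ->
       At f t x `<=` [set 2^-1 *: x + z | z in At f t 0]) /\
    Mt f t = leb_vol (At f t 0).
Proof.
move=> f_lc _ [p /interior_subset fp] t _.
split; first by move=> x _; apply: At_subset_translate_At0.
by apply: Mt_eq_At0 => //; exists p.
Qed.
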